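(* For every $\lambda\in(0,\infty)$ and $\xi\in\{0,1\}^E$, the series below converges absolutely and \[ \frac{\lambda}{N+\lambda}\sum_{n=0}^\infty\Big(\frac N{N+\lambda}\Big)^n\frac1NS_\xi\big(L_0^n(J)\big)=p_1(\xi)^2+\frac1NS_\xi\left(\frac{2(I-Q)(\lambda+2-2Q)^{-1}}{\lambda\,\mathrm{tr}\big((\lambda+2-2Q)^{-1}\big)}\right). \]
   Context: $E$ is a finite set with $N=\#E>8$ elements, listed in a fixed order; $\mathsf M_E$ is the space of complex $N\times N$ matrices indexed by $E\times E$. $Q$ is an irreducible stochastic matrix on $E$ with $Q(x,y)=Q(y,x)$ for all $x,y$ and $\mathrm{tr}(Q)=0$. $I$ is the identity, $J$ the matrix with all entries $1/N$, and $(\lambda+2-2Q)^{-1}$ the inverse of $(\lambda+2)I-2Q$. For $\xi\in\{0,1\}^E$ regarded as a vector, $S_\xi(C)=\langle\xi|C|\xi\rangle=\sum_{x,y}\xi(x)C(x,y)\xi(y)$, and $p_1(\xi)=\frac1N\sum_{x\in E}\xi(x)$. The linear operator $L_0:\mathsf M_E\to\mathsf M_E$ is $L_0(C)=\frac{N-2}NC+\frac1N(CQ+QC)-\frac{2\,\mathrm{tr}(C)}{N^2}Q+\frac{2\,\mathrm{tr}(C)}{N^2}I$, and $L_0^n$ is its $n$-fold composition. *)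

From Stdlib Require Import Reals.
Open Scope R_scope.

(* E is identified with {0,...,N-1}; matrices are functions nat -> nat -> R,
   only the entries with indices < N are relevant. *)
Definition Mat := nat -> nat -> R.

Fixpoint rsum (n : nat) (f : nat -> R) : R :=
  match n with O => 0 | S k => rsum k f + f k end.

Definition mmul (N : nat) (A B : Mat) : Mat :=
  fun i j => rsum N (fun k => A i k * B k j).

Fixpoint mpow (N : nat) (A : Mat) (n : nat) : Mat :=
  match n with
  | O => fun i j => if Nat.eqb i j then 1 else 0
  | S k => mmul N (mpow N A k) A
  end.

Definition Idm : Mat := fun i j => if Nat.eqb i j then 1 else 0.

Definition Jm (N : nat) : Mat := fun _ _ => / INR N.

Definition mtr (N : nat) (C : Mat) : R := rsum N (fun x => C x x).

Definition stochastic (N : nat) (Q : Mat) : Prop :=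
  (forall x y, (x < N)%nat -> (y < N)%nat -> 0 <= Q x y) /\
  (forall x, (x < N)%nat -> rsum N (fun y => Q x y) = 1).

Definition irreducible (N : nat) (Q : Mat) : Prop :=
  forall x y, (x < N)%nat -> (y < N)%nat -> exists n, 0 < mpow N Q n x y.

Definition symmetric (N : nat) (Q : Mat) : Prop :=
  forall x y, (x < N)%nat -> (y < N)%nat -> Q x y = Q y x.

Definition L0 (N : nat) (Q : Mat) (C : Mat) : Mat :=
  fun i j =>
    (INR N - 2) / INR N * C i j
    + / INR N * (mmul N C Q i j + mmul N Q C i j)
    - 2 * mtr N C / (INR N ^ 2) * Q i j
    + 2 * mtr N C / (INR N ^ 2) * Idm i j.

Fixpoint L0pow (N : nat) (Q : Mat) (n : nat) (C : Mat) : Mat :=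
  match n with O => C | S k => L0 N Q (L0pow N Q k C) end.

Definition b2R (b : bool) : R := if b then 1 else 0.

Definition Sxi (N : nat) (xi : nat -> bool) (C : Mat) : R :=
  rsum N (fun x => rsum N (fun y => b2R (xi x) * C x y * b2R (xi y))).

Definition p1 (N : nat) (xi : nat -> bool) : R :=
  / INR N * rsum N (fun x => b2R (xi x)).

Definition Aλ (lam : R) (Q : Mat) : Mat :=
  fun i j => (lam + 2) * Idm i j - 2 * Q i j.

Definition is_inverse (N : nat) (A M : Mat) : Prop :=
  forall i j, (i < N)%nat -> (j < N)%nat ->
    mmul N A M i j = Idm i j /\ mmul N M A i j = Idm i j.

From Stdlib Require Import Reals Lra Lia Psatz FunctionalExtensionality.
From Coquelicot Require Import Coquelicot.
Open Scope R_scope.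

(* Let r = N/(N+λ), T = λ tr M and Xres = J + (I - λM)/T (T > 0 because
   M_ii = v^T (λ + 2 - 2Q) v >= λ|v|^2 for the i-th column v of M).  Since Q M = M Q =
   ((λ+2)M - I)/2 and L0 J = J + 2(I - Q)/N^2, one finds L0 Xres = J + (Xres - J)/r, so
   J = ((N+λ) Xres - N L0 Xres)/λ and the series telescopes:
     λ/(N+λ) Σ_{n<K} r^n S(L0^n J)/N = S(Xres)/N - r^K S(L0^K Xres)/N.
   The remainder tends to 0 because L0^n grows at most linearly in n: writing D for the
   traceless part of C and P = ((N-2)I + 2Q)/N, one has L0 C = tr(C)/N I + (PD + DP)/2,
   and P is doubly stochastic, so the Frobenius norm of the traceless part never increases
   while the trace changes by a bounded amount at each step. *)

Lemma rsum_ext n f g : (forall i, (i < n)%nat -> f i = g i) -> rsum n f = rsum n g.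
Proof.
  induction n as [|n IH]; simpl; intros H; auto.
  rewrite IH by (intros; apply H; lia); rewrite H by lia; reflexivity.
Qed.

Lemma rsum_plus n f g : rsum n (fun i => f i + g i) = rsum n f + rsum n g.
Proof. induction n as [|n IH]; simpl; [ring | rewrite IH; ring]. Qed.

Lemma rsum_scal n c f : rsum n (fun i => c * f i) = c * rsum n f.
Proof. induction n as [|n IH]; simpl; [ring | rewrite IH; ring]. Qed.

Lemma rsum_lin n a b f g :
  rsum n (fun i => a * f i + b * g i) = a * rsum n f + b * rsum n g.
Proof. rewrite rsum_plus, !rsum_scal; reflexivity. Qed.

Lemma rsum_const n c : rsum n (fun _ => c) = INR n * c.
Proof. induction n as [|n IH]; simpl rsum; [simpl; ring | rewrite IH, S_INR; ring]. Qed.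

Lemma rsum_telescope n w : rsum n (fun k => w k - w (S k)) = w 0%nat - w n.
Proof. induction n as [|n IH]; simpl; [ring | rewrite IH; ring]. Qed.

Lemma rsum_le n f g : (forall i, (i < n)%nat -> f i <= g i) -> rsum n f <= rsum n g.
Proof.
  induction n as [|n IH]; simpl; intros H; [lra |].
  assert (rsum n f <= rsum n g) by (apply IH; intros; apply H; lia).
  specialize (H n ltac:(lia)); lra.
Qed.

Lemma rsum_nonneg n f : (forall i, (i < n)%nat -> 0 <= f i) -> 0 <= rsum n f.
Proof.
  intros H; replace 0 with (rsum n (fun _ => 0)) by (rewrite rsum_const; ring).
  apply rsum_le; auto.
Qed.

Lemma rsum_Rabs_le n f : Rabs (rsum n f) <= rsum n (fun i => Rabs (f i)).
Proof.
  induction n as [|n IH]; simpl; [rewrite Rabs_R0; lra |].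
  eapply Rle_trans; [apply Rabs_triang | lra].
Qed.

Lemma rsum_swap n m f :
  rsum n (fun i => rsum m (fun j => f i j)) = rsum m (fun j => rsum n (fun i => f i j)).
Proof.
  induction n as [|n IH]; simpl.
  - rewrite rsum_const; ring.
  - rewrite IH, <- rsum_plus; reflexivity.
Qed.

Lemma rsum_term_le n f i :
  (forall k, (k < n)%nat -> 0 <= f k) -> (i < n)%nat -> f i <= rsum n f.
Proof.
  induction n as [|n IH]; intros H Hi; [lia |]; simpl.
  destruct (Nat.eq_dec i n) as [-> | Hne].
  - assert (0 <= rsum n f) by (apply rsum_nonneg; intros; apply H; lia); lra.
  - assert (f i <= rsum n f) by (apply IH; [intros; apply H; lia | lia]).
    specialize (H n ltac:(lia)); lra.
Qed.

Lemma rsum_pos n f : (0 < n)%nat -> (forall i, (i < n)%nat -> 0 < f i) -> 0 < rsum n f.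
Proof.
  intros Hn H; apply Rlt_le_trans with (f 0%nat); auto.
  apply rsum_term_le; auto; intros; left; auto.
Qed.

Lemma Idm_diag i : Idm i i = 1.
Proof. unfold Idm; rewrite Nat.eqb_refl; reflexivity. Qed.

Lemma Idm_neq i j : i <> j -> Idm i j = 0.
Proof. intros H; unfold Idm; apply Nat.eqb_neq in H; rewrite H; reflexivity. Qed.

Lemma rsum_Idm_l n j f : (j < n)%nat -> rsum n (fun k => Idm j k * f k) = f j.
Proof.
  induction n as [|n IH]; intros Hj; [lia |]; simpl.
  destruct (Nat.eq_dec j n) as [-> | Hne].
  - rewrite (rsum_ext _ _ (fun _ => 0)) by (intros; rewrite Idm_neq by lia; ring).
    rewrite rsum_const, Idm_diag; ring.
  - rewrite IH, Idm_neq by lia; ring.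
Qed.

Lemma rsum_Idm_r n j f : (j < n)%nat -> rsum n (fun k => f k * Idm k j) = f j.
Proof.
  intros Hj; rewrite <- (rsum_Idm_l n j f Hj); apply rsum_ext; intros.
  unfold Idm; rewrite Nat.eqb_sym; ring.
Qed.

Definition mlin (a : R) (C : Mat) (b : R) (D : Mat) : Mat := fun i j => a * C i j + b * D i j.

Definition mx_agree (N : nat) (C D : Mat) : Prop :=
  forall i j, (i < N)%nat -> (j < N)%nat -> C i j = D i j.

Lemma mmul_mlin_l N a C b D E i j :
  mmul N (mlin a C b D) E i j = a * mmul N C E i j + b * mmul N D E i j.
Proof. unfold mmul, mlin; rewrite <- rsum_lin; apply rsum_ext; intros; ring. Qed.

Lemma mmul_mlin_r N a C b D E i j :
  mmul N E (mlin a C b D) i j = a * mmul N E C i j + b * mmul N E D i j.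
Proof. unfold mmul, mlin; rewrite <- rsum_lin; apply rsum_ext; intros; ring. Qed.

Lemma mmul_Idm_l N C i j : (i < N)%nat -> mmul N Idm C i j = C i j.
Proof. intros; apply (rsum_Idm_l N i (fun k => C k j)); auto. Qed.

Lemma mmul_Idm_r N C i j : (j < N)%nat -> mmul N C Idm i j = C i j.
Proof. intros; apply (rsum_Idm_r N j (fun k => C i k)); auto. Qed.

Lemma mtr_mlin N a C b D : mtr N (mlin a C b D) = a * mtr N C + b * mtr N D.
Proof. apply rsum_lin. Qed.

Lemma mtr_Idm N : mtr N Idm = INR N.
Proof.
  unfold mtr; rewrite (rsum_ext _ _ (fun _ => 1)) by (intros; apply Idm_diag).
  rewrite rsum_const; ring.
Qed.

Lemma L0_mlin N Q a C b D : L0 N Q (mlin a C b D) = mlin a (L0 N Q C) b (L0 N Q D).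
Proof.
  do 2 (apply functional_extensionality; intro).
  unfold L0 at 1; rewrite !mmul_mlin_l, !mmul_mlin_r, mtr_mlin.
  unfold mlin, L0, Rdiv; ring.
Qed.

Lemma L0pow_mlin N Q n a C b D :
  L0pow N Q n (mlin a C b D) = mlin a (L0pow N Q n C) b (L0pow N Q n D).
Proof. induction n as [|n IH]; simpl; [reflexivity | rewrite IH; apply L0_mlin]. Qed.

Lemma L0pow_L0 N Q n C : L0pow N Q n (L0 N Q C) = L0pow N Q (S n) C.
Proof. induction n as [|n IH]; simpl; [reflexivity | rewrite IH; reflexivity]. Qed.

Lemma L0_agree N Q C D : mx_agree N C D -> mx_agree N (L0 N Q C) (L0 N Q D).
Proof.
  intros H i j Hi Hj; unfold L0, mmul, mtr.
  rewrite (rsum_ext N (fun k => C i k * Q k j) (fun k => D i k * Q k j))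
    by (intros; rewrite H; auto).
  rewrite (rsum_ext N (fun k => Q i k * C k j) (fun k => Q i k * D k j))
    by (intros; rewrite H; auto).
  rewrite (rsum_ext N (fun x => C x x) (fun x => D x x)) by (intros; apply H; auto).
  rewrite H; auto.
Qed.

Lemma L0pow_agree N Q n C D :
  mx_agree N C D -> mx_agree N (L0pow N Q n C) (L0pow N Q n D).
Proof. induction n as [|n IH]; simpl; auto; intros; apply L0_agree; auto. Qed.

Lemma Sxi_agree N xi C D : mx_agree N C D -> Sxi N xi C = Sxi N xi D.
Proof.
  intros H; unfold Sxi; apply rsum_ext; intros; apply rsum_ext; intros.
  rewrite H; auto.
Qed.

Lemma Sxi_mlin N xi a C b D :
  Sxi N xi (mlin a C b D) = a * Sxi N xi C + b * Sxi N xi D.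
Proof.
  unfold Sxi; rewrite <- rsum_lin; apply rsum_ext; intros.
  rewrite <- rsum_lin; apply rsum_ext; intros; unfold mlin; ring.
Qed.

Lemma Sxi_scal N xi a C : Sxi N xi (fun i j => a * C i j) = a * Sxi N xi C.
Proof.
  unfold Sxi; rewrite <- rsum_scal; apply rsum_ext; intros.
  rewrite <- rsum_scal; apply rsum_ext; intros; ring.
Qed.

Lemma Sxi_Jm N xi : (0 < N)%nat -> Sxi N xi (Jm N) = INR N * p1 N xi ^ 2.
Proof.
  intros HN; assert (0 < INR N) by (apply lt_0_INR; lia).
  unfold Sxi, Jm, p1; set (B := rsum N (fun x => b2R (xi x))).
  rewrite (rsum_ext _ _ (fun x => (/ INR N * B) * b2R (xi x))).
  - rewrite rsum_scal; fold B; field; lra.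
  - intros x _; rewrite rsum_scal; fold B; ring.
Qed.

Lemma Sxi_bound N xi C B :
  (forall i j, (i < N)%nat -> (j < N)%nat -> Rabs (C i j) <= B) ->
  Rabs (Sxi N xi C) <= INR N * (INR N * B).
Proof.
  intros H; unfold Sxi; eapply Rle_trans; [apply rsum_Rabs_le |].
  rewrite <- rsum_const; apply rsum_le; intros i Hi.
  eapply Rle_trans; [apply rsum_Rabs_le |].
  rewrite <- rsum_const; apply rsum_le; intros j Hj.
  specialize (H i j Hi Hj); pose proof (Rabs_pos (C i j)).
  destruct (xi i), (xi j); simpl;
    rewrite ?Rmult_1_l, ?Rmult_1_r, ?Rmult_0_l, ?Rmult_0_r, ?Rabs_R0; lra.
Qed.

Lemma INR_mul_pow_le r :
  0 < r < 1 -> exists K, forall n, INR n * r ^ n <= K * ((1 + r) / 2) ^ n.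
Proof.
  intros Hr; set (h := (1 - r) / (2 * r)).
  assert (Hh : 0 < h) by (unfold h; apply Rdiv_lt_0_compat; lra).
  exists (/ h); intros n.
  replace ((1 + r) / 2) with ((1 + h) * r) by (unfold h; field; lra).
  rewrite Rpow_mult_distr.
  assert (INR n * h <= (1 + h) ^ n) by (pose proof (poly n h Hh); lra).
  assert (0 <= r ^ n) by (apply pow_le; lra).
  apply Rmult_le_reg_l with h; [exact Hh |].
  replace (h * (/ h * ((1 + h) ^ n * r ^ n))) with ((1 + h) ^ n * r ^ n) by (field; lra).
  nra.
Qed.

Lemma ex_series_pow_linear r al be u :
  0 < r < 1 -> 0 <= be -> (forall n, Rabs (u n) <= al + be * INR n) ->
  ex_series (fun n => Rabs (r ^ n * u n)).
Proof.
  intros Hr Hbe Hu; destruct (INR_mul_pow_le r Hr) as [K HK].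
  set (rho := (1 + r) / 2).
  assert (Hal : 0 <= al) by (specialize (Hu 0%nat); simpl INR in Hu;
    pose proof (Rabs_pos (u 0%nat)); lra).
  apply (@ex_series_le R_AbsRing R_CompleteNormedModule _ (fun n => (al + be * K) * rho ^ n)).
  - intros n; change (norm (Rabs (r ^ n * u n))) with (Rabs (Rabs (r ^ n * u n))).
    rewrite Rabs_Rabsolu, Rabs_mult, (Rabs_pos_eq (r ^ n)) by (apply pow_le; lra).
    assert (0 <= r ^ n) by (apply pow_le; lra).
    assert (r ^ n <= rho ^ n) by (apply pow_incr; unfold rho; lra).
    specialize (Hu n); specialize (HK n); fold rho in HK.
    apply Rle_trans with (al * r ^ n + be * (INR n * r ^ n)); [nra |].
    assert (be * (INR n * r ^ n) <= be * (K * rho ^ n)) by (apply Rmult_le_compat_l; auto).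
    nra.
  - apply (ex_series_ext (fun n => scal (al + be * K) (rho ^ n))); [reflexivity |].
    apply (@ex_series_scal_l R_AbsRing R_NormedModule), ex_series_geom.
    rewrite Rabs_pos_eq; unfold rho; lra.
Qed.

Lemma sum_f_R0_rsum f n : sum_f_R0 f n = rsum (S n) f.
Proof. induction n as [|n IH]; simpl; [ring | rewrite IH; reflexivity]. Qed.

Lemma is_series_of_lim_sum_n (a : nat -> R) (l : R) : is_lim_seq (sum_n a) l -> is_series a l.
Proof. exact (fun H => H). Qed.

Lemma div_add_in_01 x y : 0 < x -> 0 < y -> 0 < x / (x + y) < 1.
Proof.
  intros Hx Hy; split; [apply Rdiv_lt_0_compat; lra |].
  apply Rmult_lt_reg_r with (x + y); [lra |].
  unfold Rdiv; rewrite Rmult_assoc, Rinv_l; lra.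
Qed.

Lemma sq_rsum_convex_le n p x :
  (forall k, (k < n)%nat -> 0 <= p k) -> rsum n p = 1 ->
  rsum n (fun k => p k * x k) ^ 2 <= rsum n (fun k => p k * x k ^ 2).
Proof.
  intros Hp Hs; set (m := rsum n (fun k => p k * x k)).
  assert (H : 0 <= rsum n (fun k => p k * (x k - m) ^ 2))
    by (apply rsum_nonneg; intros; apply Rmult_le_pos; [auto | apply pow2_ge_0]).
  rewrite (rsum_ext _ _ (fun k => (p k * x k ^ 2 + (-2 * m) * (p k * x k)) + m ^ 2 * p k))
    in H by (intros; ring).
  rewrite !rsum_plus, !rsum_scal, Hs in H; fold m in H; nra.
Qed.

Definition frob2 (N : nat) (C : Mat) : R := rsum N (fun i => rsum N (fun j => C i j ^ 2)).

Definition traceless (N : nat) (C : Mat) : Mat := mlin 1 C (- (mtr N C / INR N)) Idm.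

Lemma frob2_nonneg N C : 0 <= frob2 N C.
Proof. apply rsum_nonneg; intros; apply rsum_nonneg; intros; apply pow2_ge_0. Qed.

Lemma frob2_agree N C D : mx_agree N C D -> frob2 N C = frob2 N D.
Proof.
  intros H; unfold frob2; apply rsum_ext; intros; apply rsum_ext; intros.
  rewrite H; auto.
Qed.

Lemma sq_entry_le_frob2 N C i j : (i < N)%nat -> (j < N)%nat -> C i j ^ 2 <= frob2 N C.
Proof.
  intros Hi Hj; unfold frob2.
  apply Rle_trans with (rsum N (fun j => C i j ^ 2)).
  - apply (rsum_term_le N (fun j => C i j ^ 2)); auto; intros; apply pow2_ge_0.
  - apply (rsum_term_le N (fun i => rsum N (fun j => C i j ^ 2))); auto.
    intros; apply rsum_nonneg; intros; apply pow2_ge_0.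
Qed.

Lemma Rabs_le_sq x : Rabs x <= (1 + x ^ 2) / 2.
Proof.
  destruct (Rle_dec 0 x).
  - rewrite Rabs_pos_eq by lra; pose proof (pow2_ge_0 (x - 1)); nra.
  - rewrite Rabs_left by lra; pose proof (pow2_ge_0 (x + 1)); nra.
Qed.

Lemma Rabs_mtr_le N C : Rabs (mtr N C) <= (INR N + frob2 N C) / 2.
Proof.
  unfold mtr; eapply Rle_trans; [apply rsum_Rabs_le |].
  apply Rle_trans with (rsum N (fun i => / 2 * 1 + / 2 * rsum N (fun j => C i j ^ 2))).
  - apply rsum_le; intros i Hi; eapply Rle_trans; [apply Rabs_le_sq |].
    assert (C i i ^ 2 <= rsum N (fun j => C i j ^ 2))
      by (apply (rsum_term_le N (fun j => C i j ^ 2)); auto; intros; apply pow2_ge_0).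
    lra.
  - rewrite rsum_lin, rsum_const; unfold frob2; lra.
Qed.

Section PositiveDimension.

Variable N : nat.
Hypothesis HN : (0 < N)%nat.

Let INR_N_pos : 0 < INR N.
Proof. apply lt_0_INR; lia. Qed.

(* Removing the trace is the orthogonal projection onto traceless matrices. *)
Lemma frob2_traceless_le C : frob2 N (traceless N C) <= frob2 N C.
Proof.
  set (c := mtr N C / INR N); unfold frob2, traceless, mlin; fold c.
  rewrite (rsum_ext _ _ (fun i => rsum N (fun j => C i j ^ 2) + (c ^ 2 - 2 * c * C i i))).
  2:{ intros i Hi.
      rewrite (rsum_ext _ _ (fun j => C i j ^ 2 + Idm i j * (c ^ 2 - 2 * c * C i j)))
        by (intros j _; unfold Idm; destruct (Nat.eqb i j); ring).
      rewrite rsum_plus, rsum_Idm_l by auto; reflexivity. }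
  rewrite rsum_plus.
  rewrite (rsum_ext N (fun i => c ^ 2 - 2 * c * C i i) (fun i => 1 * c ^ 2 + (-2 * c) * C i i))
    by (intros; ring).
  rewrite rsum_lin, rsum_const; fold (mtr N C).
  assert (INR N * 1 * c ^ 2 + -2 * c * mtr N C = - (mtr N C ^ 2 / INR N))
    by (unfold c; field; lra).
  assert (0 <= mtr N C ^ 2 / INR N)
    by (apply Rmult_le_pos; [apply pow2_ge_0 | left; apply Rinv_0_lt_compat; lra]).
  lra.
Qed.

Lemma Rabs_entry_le C i j : (i < N)%nat -> (j < N)%nat ->
  Rabs (C i j) <= (1 + frob2 N (traceless N C)) / 2 + Rabs (mtr N C) / INR N.
Proof.
  intros Hi Hj.
  pose proof (sq_entry_le_frob2 N (traceless N C) i j Hi Hj).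
  pose proof (Rabs_le_sq (traceless N C i j)).
  replace (C i j) with (traceless N C i j + mtr N C / INR N * Idm i j)
    by (unfold traceless, mlin; ring).
  eapply Rle_trans; [apply Rabs_triang |].
  assert (Rabs (mtr N C / INR N * Idm i j) <= Rabs (mtr N C) / INR N).
  { rewrite Rabs_mult; unfold Rdiv; rewrite Rabs_mult, (Rabs_pos_eq (/ INR N))
      by (left; apply Rinv_0_lt_compat; lra).
    assert (Rabs (Idm i j) <= 1)
      by (unfold Idm; destruct (Nat.eqb i j); rewrite ?Rabs_R1, ?Rabs_R0; lra).
    assert (0 <= Rabs (mtr N C) * / INR N)
      by (apply Rmult_le_pos; [apply Rabs_pos | left; apply Rinv_0_lt_compat; lra]).
    pose proof (Rabs_pos (Idm i j)); nra. }
  lra.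
Qed.

End PositiveDimension.

Definition Plazy (N : nat) (Q : Mat) : Mat := mlin ((INR N - 2) / INR N) Idm (2 / INR N) Q.

Definition Psym (N : nat) (Q : Mat) (D : Mat) : Mat :=
  fun i j => / 2 * (mmul N (Plazy N Q) D i j + mmul N D (Plazy N Q) i j).

Section LinearGrowth.

Variables (N : nat) (Q : Mat).
Hypotheses (HN : (2 <= N)%nat) (Hst : stochastic N Q) (Hsym : symmetric N Q).

Let INR_N_pos : 0 < INR N.
Proof. apply lt_0_INR; lia. Qed.

Let INR_N_ge2 : 2 <= INR N.
Proof. apply (le_INR 2); lia. Qed.

Lemma Q_col_sum y : (y < N)%nat -> rsum N (fun x => Q x y) = 1.
Proof.
  intros Hy; destruct Hst as [_ Hrow]; rewrite <- (Hrow y Hy).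
  apply rsum_ext; intros; apply Hsym; auto.
Qed.

Lemma Plazy_nonneg i k : (i < N)%nat -> (k < N)%nat -> 0 <= Plazy N Q i k.
Proof.
  intros Hi Hk; unfold Plazy, mlin; pose proof (proj1 Hst i k Hi Hk).
  assert (0 <= Idm i k) by (unfold Idm; destruct (Nat.eqb i k); lra).
  assert (0 <= (INR N - 2) / INR N)
    by (apply Rmult_le_pos; [lra | left; apply Rinv_0_lt_compat; lra]).
  assert (0 <= 2 / INR N) by (apply Rmult_le_pos; [lra | left; apply Rinv_0_lt_compat; lra]).
  nra.
Qed.

Lemma Plazy_row_sum i : (i < N)%nat -> rsum N (fun k => Plazy N Q i k) = 1.
Proof.
  intros Hi; unfold Plazy, mlin; rewrite rsum_lin.
  rewrite (rsum_ext _ _ (fun k => Idm i k * 1)) by (intros; ring).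
  rewrite rsum_Idm_l, (proj2 Hst i Hi : rsum N (Q i) = 1) by auto; field; lra.
Qed.

Lemma Plazy_col_sum k : (k < N)%nat -> rsum N (fun i => Plazy N Q i k) = 1.
Proof.
  intros Hk; unfold Plazy, mlin; rewrite rsum_lin.
  rewrite (rsum_ext _ _ (fun i => 1 * Idm i k)) by (intros; ring).
  rewrite rsum_Idm_r, Q_col_sum by auto; field; lra.
Qed.

Lemma frob2_Plazy_mmul_le D : frob2 N (mmul N (Plazy N Q) D) <= frob2 N D.
Proof.
  unfold frob2, mmul.
  apply Rle_trans with
    (rsum N (fun i => rsum N (fun j => rsum N (fun k => Plazy N Q i k * D k j ^ 2)))).
  - apply rsum_le; intros; apply rsum_le; intros; apply sq_rsum_convex_le.
    + intros; apply Plazy_nonneg; auto.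
    + apply Plazy_row_sum; auto.
  - right; rewrite rsum_swap, (rsum_swap N N (fun i j => D i j ^ 2)).
    apply rsum_ext; intros j Hj; rewrite rsum_swap; apply rsum_ext; intros k Hk.
    rewrite (rsum_ext _ _ (fun i => D k j ^ 2 * Plazy N Q i k)) by (intros; ring).
    rewrite rsum_scal, Plazy_col_sum by auto; ring.
Qed.

Lemma frob2_mmul_Plazy_le D : frob2 N (mmul N D (Plazy N Q)) <= frob2 N D.
Proof.
  unfold frob2, mmul.
  apply Rle_trans with
    (rsum N (fun i => rsum N (fun j => rsum N (fun k => Plazy N Q k j * D i k ^ 2)))).
  - apply rsum_le; intros i Hi; apply rsum_le; intros j Hj.
    rewrite (rsum_ext _ _ (fun k => Plazy N Q k j * D i k)) by (intros; ring).
    apply sq_rsum_convex_le.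
    + intros; apply Plazy_nonneg; auto.
    + apply Plazy_col_sum; auto.
  - right; apply rsum_ext; intros i Hi; rewrite rsum_swap; apply rsum_ext; intros k Hk.
    rewrite (rsum_ext _ _ (fun j => D i k ^ 2 * Plazy N Q k j)) by (intros; ring).
    rewrite rsum_scal, Plazy_row_sum by auto; ring.
Qed.

Lemma frob2_Psym_le D : frob2 N (Psym N Q D) <= frob2 N D.
Proof.
  pose proof (frob2_Plazy_mmul_le D); pose proof (frob2_mmul_Plazy_le D).
  apply Rle_trans with
    (/ 2 * frob2 N (mmul N (Plazy N Q) D) + / 2 * frob2 N (mmul N D (Plazy N Q))); [| lra].
  unfold frob2; rewrite <- rsum_lin; apply rsum_le; intros i Hi.
  rewrite <- rsum_lin; apply rsum_le; intros j Hj; unfold Psym.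
  pose proof (pow2_ge_0 (mmul N (Plazy N Q) D i j - mmul N D (Plazy N Q) i j)); nra.
Qed.

Lemma L0_split C i j : (i < N)%nat -> (j < N)%nat ->
  L0 N Q C i j = mtr N C / INR N * Idm i j + Psym N Q (traceless N C) i j.
Proof.
  intros Hi Hj; unfold Psym, traceless, Plazy.
  rewrite mmul_mlin_l, !mmul_mlin_r, !mmul_mlin_l, !mmul_Idm_l, !mmul_Idm_r by auto.
  unfold L0, mlin; field; lra.
Qed.

Lemma mtr_L0 C : mtr N (L0 N Q C) = mtr N C + mtr N (Psym N Q (traceless N C)).
Proof.
  unfold mtr at 1; rewrite (rsum_ext _ _
    (fun i => mtr N C / INR N * Idm i i + Psym N Q (traceless N C) i i))
    by (intros; apply L0_split; auto).
  rewrite rsum_plus, (rsum_ext _ _ (fun _ => mtr N C / INR N))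
    by (intros; rewrite Idm_diag; ring).
  rewrite rsum_const; unfold mtr at 3; field; lra.
Qed.

Lemma traceless_L0 C :
  mx_agree N (traceless N (L0 N Q C)) (traceless N (Psym N Q (traceless N C))).
Proof.
  intros i j Hi Hj; unfold traceless at 1 2, mlin.
  rewrite mtr_L0, L0_split by auto; field; lra.
Qed.

Lemma L0pow_linear_bound C : exists al be, 0 <= be /\
  forall n i j, (i < N)%nat -> (j < N)%nat -> Rabs (L0pow N Q n C i j) <= al + be * INR n.
Proof.
  set (F := frob2 N (traceless N C)); set (t0 := mtr N C).
  assert (HF : 0 <= F) by apply frob2_nonneg.
  assert (Hind : forall n, frob2 N (traceless N (L0pow N Q n C)) <= F /\
    Rabs (mtr N (L0pow N Q n C)) <= Rabs t0 + INR n * ((INR N + F) / 2)).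
  { induction n as [|n [IHF IHt]]; simpl L0pow.
    - simpl INR; rewrite Rmult_0_l, Rplus_0_r; split; apply Rle_refl.
    - set (D := traceless N (L0pow N Q n C)) in *.
      pose proof (frob2_Psym_le D) as HP.
      split.
      + rewrite (frob2_agree _ _ _ (traceless_L0 _)); fold D.
        pose proof (frob2_traceless_le N ltac:(lia) (Psym N Q D)); lra.
      + rewrite mtr_L0, S_INR; fold D.
        pose proof (Rabs_triang (mtr N (L0pow N Q n C)) (mtr N (Psym N Q D))).
        pose proof (Rabs_mtr_le N (Psym N Q D)); lra. }
  exists ((1 + F) / 2 + Rabs t0 / INR N), ((INR N + F) / 2 / INR N); split.
  { apply Rmult_le_pos; [lra | left; apply Rinv_0_lt_compat; lra]. }
  intros n i j Hi Hj; destruct (Hind n) as [HFn Htn].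
  eapply Rle_trans; [apply (Rabs_entry_le N ltac:(lia)); auto |].
  assert (Rabs (mtr N (L0pow N Q n C)) / INR N
          <= Rabs t0 / INR N + (INR N + F) / 2 / INR N * INR n).
  { replace (Rabs t0 / INR N + (INR N + F) / 2 / INR N * INR n)
      with ((Rabs t0 + INR n * ((INR N + F) / 2)) / INR N) by (field; lra).
    apply Rmult_le_compat_r; [left; apply Rinv_0_lt_compat |]; lra. }
  lra.
Qed.

Lemma ex_series_Sxi_L0pow xi C r : 0 < r < 1 ->
  ex_series (fun n => Rabs (r ^ n * (/ INR N * Sxi N xi (L0pow N Q n C)))).
Proof.
  intros Hr; destruct (L0pow_linear_bound C) as [al [be [Hbe Hbound]]].
  apply (ex_series_pow_linear r (INR N * al) (INR N * be)); auto.
  - apply Rmult_le_pos; lra.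
  - intros n; rewrite Rabs_mult, Rabs_pos_eq by (left; apply Rinv_0_lt_compat; lra).
    pose proof (Sxi_bound N xi _ _ (Hbound n)) as HS.
    apply Rmult_le_reg_l with (INR N); [lra |].
    rewrite <- Rmult_assoc, Rinv_r, Rmult_1_l by lra.
    replace (INR N * (INR N * al + INR N * be * INR n))
      with (INR N * (INR N * (al + be * INR n))) by ring.
    exact HS.
Qed.

End LinearGrowth.

Lemma quad_form_le N Q v : stochastic N Q -> symmetric N Q ->
  rsum N (fun k => rsum N (fun l => Q k l * v k * v l)) <= rsum N (fun k => v k ^ 2).
Proof.
  intros [Hnn Hrow] Hsym.
  assert (Hrow_sq : forall k, (k < N)%nat -> rsum N (fun l => Q k l * v k ^ 2) = v k ^ 2).
  { intros k Hk; rewrite (rsum_ext _ _ (fun l => v k ^ 2 * Q k l)) by (intros; ring).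
    rewrite rsum_scal, (Hrow k Hk : rsum N (Q k) = 1); ring. }
  apply Rle_trans with
    (rsum N (fun k => / 2 * rsum N (fun l => Q k l * v k ^ 2)
                    + / 2 * rsum N (fun l => Q k l * v l ^ 2))).
  - apply rsum_le; intros k Hk; rewrite <- rsum_lin; apply rsum_le; intros l Hl.
    pose proof (Hnn k l Hk Hl); pose proof (pow2_ge_0 (v k - v l)); nra.
  - right; rewrite rsum_lin, (rsum_swap N N (fun k l => Q k l * v l ^ 2)).
    rewrite (rsum_ext N _ (fun k => v k ^ 2)) by (intros; apply Hrow_sq; auto).
    rewrite (rsum_ext N (fun l => rsum N (fun k => Q k l * v l ^ 2)) (fun k => v k ^ 2)).
    + field.
    + intros l Hl; transitivity (rsum N (fun k => Q l k * v l ^ 2)); [| apply Hrow_sq; auto].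
      apply rsum_ext; intros k Hk; rewrite Hsym; auto.
Qed.

Lemma mmul_Aλ_l N lam Q C i j : (i < N)%nat ->
  mmul N (Aλ lam Q) C i j = (lam + 2) * C i j - 2 * mmul N Q C i j.
Proof.
  intros Hi; unfold mmul, Aλ.
  rewrite (rsum_ext _ _ (fun k => (lam + 2) * (Idm i k * C k j) + (-2) * (Q i k * C k j)))
    by (intros; ring).
  rewrite rsum_lin, (rsum_Idm_l N i (fun k => C k j)) by auto; ring.
Qed.

Lemma mmul_Aλ_r N lam Q C i j : (j < N)%nat ->
  mmul N C (Aλ lam Q) i j = (lam + 2) * C i j - 2 * mmul N C Q i j.
Proof.
  intros Hj; unfold mmul, Aλ.
  rewrite (rsum_ext _ _ (fun k => (lam + 2) * (C i k * Idm k j) + (-2) * (C i k * Q k j)))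
    by (intros; ring).
  rewrite rsum_lin, (rsum_Idm_r N j (fun k => C i k)) by auto; ring.
Qed.

Definition Xres (N : nat) (lam : R) (M : Mat) : Mat :=
  mlin 1 (Jm N) (/ (lam * mtr N M)) (mlin 1 Idm (- lam) M).

Section Resolvent.

Variables (N : nat) (Q : Mat) (lam : R) (M : Mat).
Hypotheses (HN : (2 <= N)%nat) (Hst : stochastic N Q) (Hsym : symmetric N Q).
Hypotheses (Hlam : 0 < lam) (Hinv : is_inverse N (Aλ lam Q) M).

Let INR_N_pos : 0 < INR N.
Proof. apply lt_0_INR; lia. Qed.

Lemma mmul_Q_resolvent i j : (i < N)%nat -> (j < N)%nat ->
  mmul N Q M i j = ((lam + 2) * M i j - Idm i j) / 2.
Proof.
  intros Hi Hj; pose proof (proj1 (Hinv i j Hi Hj)) as H.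
  rewrite mmul_Aλ_l in H by auto; lra.
Qed.

Lemma mmul_resolvent_Q i j : (i < N)%nat -> (j < N)%nat -> mmul N M Q i j = mmul N Q M i j.
Proof.
  intros Hi Hj; pose proof (proj2 (Hinv i j Hi Hj)) as H.
  rewrite mmul_Aλ_r in H by auto; rewrite mmul_Q_resolvent by auto; lra.
Qed.

Lemma mmul_IsubQ_resolvent i j : (i < N)%nat -> (j < N)%nat ->
  2 * mmul N (fun x y => Idm x y - Q x y) M i j = Idm i j - lam * M i j.
Proof.
  intros Hi Hj; unfold mmul.
  rewrite (rsum_ext _ _ (fun k => 1 * (Idm i k * M k j) + (-1) * (Q i k * M k j)))
    by (intros; ring).
  rewrite rsum_lin, (rsum_Idm_l N i (fun k => M k j)) by auto.
  fold (mmul N Q M i j); rewrite mmul_Q_resolvent by auto; field.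
Qed.

Lemma mtr_resolvent_pos : 0 < mtr N M.
Proof.
  apply rsum_pos; [lia |]; intros i Hi; set (v := fun k => M k i).
  assert (Hform : M i i = (lam + 2) * rsum N (fun k => v k ^ 2)
                          - 2 * rsum N (fun k => rsum N (fun l => Q k l * v k * v l))).
  { change (M i i) with (v i); rewrite <- (rsum_Idm_r N i v Hi).
    rewrite (rsum_ext _ _ (fun k => (lam + 2) * v k ^ 2
                                    + (-2) * rsum N (fun l => Q k l * v k * v l))).
    - rewrite rsum_lin; ring.
    - intros k Hk; rewrite <- (proj1 (Hinv k i Hk Hi)), mmul_Aλ_l by auto.
      unfold mmul; rewrite (rsum_ext N (fun l => Q k l * v k * v l)
                              (fun l => v k * (Q k l * M l i))) by (intros; unfold v; ring).
      rewrite rsum_scal; unfold v; ring. }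
  assert (Hcol : 0 < rsum N (fun k => v k ^ 2)).
  { destruct (Rle_lt_or_eq_dec 0 (rsum N (fun k => v k ^ 2))) as [| Hzero]; auto.
    - apply rsum_nonneg; intros; apply pow2_ge_0.
    - exfalso; pose proof (proj1 (Hinv i i Hi Hi)) as H1.
      rewrite Idm_diag in H1; unfold mmul in H1.
      rewrite (rsum_ext _ _ (fun _ => 0)), rsum_const in H1; [lra |].
      intros k Hk; assert (v k ^ 2 <= 0).
      { rewrite Hzero; apply (rsum_term_le N (fun k => v k ^ 2)); auto.
        intros; apply pow2_ge_0. }
      change (M k i) with (v k); replace (v k) with 0 by nra; ring. }
  pose proof (quad_form_le N Q v Hst Hsym); nra.
Qed.

Lemma L0_Idm i j : (i < N)%nat -> (j < N)%nat -> L0 N Q Idm i j = Idm i j.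
Proof.
  intros Hi Hj; unfold L0; rewrite mmul_Idm_l, mmul_Idm_r, mtr_Idm by auto.
  field; lra.
Qed.

Lemma L0_Jm i j : (i < N)%nat -> (j < N)%nat ->
  L0 N Q (Jm N) i j = Jm N i j + 2 / INR N ^ 2 * (Idm i j - Q i j).
Proof.
  intros Hi Hj; unfold L0, mmul, mtr, Jm.
  rewrite (rsum_ext N (fun k => Q i k * / INR N) (fun k => / INR N * Q i k)) by (intros; ring).
  rewrite !rsum_scal, rsum_const, Q_col_sum, (proj2 Hst i Hi : rsum N (Q i) = 1) by auto.
  field; lra.
Qed.

Lemma L0_resolvent i j : (i < N)%nat -> (j < N)%nat ->
  L0 N Q M i j = (INR N + lam) / INR N * M i j - Idm i j / INR N
                 + 2 * mtr N M / INR N ^ 2 * (Idm i j - Q i j).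
Proof.
  intros Hi Hj; unfold L0; rewrite mmul_resolvent_Q, mmul_Q_resolvent by auto.
  field; lra.
Qed.

Lemma Jm_agree_Xres : mx_agree N (Jm N)
  (mlin ((INR N + lam) / lam) (Xres N lam M) (- (INR N / lam)) (L0 N Q (Xres N lam M))).
Proof.
  intros i j Hi Hj; pose proof mtr_resolvent_pos.
  unfold Xres; rewrite !L0_mlin; unfold mlin.
  rewrite L0_Jm, L0_Idm, L0_resolvent by auto.
  unfold Jm; field; lra.
Qed.

Lemma is_series_Xres xi :
  is_series (fun n => (INR N / (INR N + lam)) ^ n * (/ INR N * Sxi N xi (L0pow N Q n (Jm N))))
            ((INR N + lam) / lam * (/ INR N * Sxi N xi (Xres N lam M))).
Proof.
  set (r := INR N / (INR N + lam)).
  assert (Hr : 0 < r < 1) by (apply div_add_in_01; lra).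
  set (w := fun n => r ^ n * (/ INR N * Sxi N xi (L0pow N Q n (Xres N lam M)))).
  assert (Htelescope : forall n,
    r ^ n * (/ INR N * Sxi N xi (L0pow N Q n (Jm N))) = (INR N + lam) / lam * (w n - w (S n))).
  { intros n; rewrite (Sxi_agree _ _ _ _ (L0pow_agree N Q n _ _ Jm_agree_Xres)).
    rewrite L0pow_mlin, Sxi_mlin, L0pow_L0; unfold w, r; simpl pow; field; lra. }
  assert (Hw : is_lim_seq w 0)
    by apply ex_series_lim_0, ex_series_Rabs, (ex_series_Sxi_L0pow N Q HN Hst Hsym), Hr.
  replace ((INR N + lam) / lam * (/ INR N * Sxi N xi (Xres N lam M)))
    with ((INR N + lam) / lam * (w 0%nat - 0)) by (unfold w; simpl; ring).
  apply is_series_of_lim_sum_n.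
  apply (is_lim_seq_ext (fun n => (INR N + lam) / lam * (w 0%nat - w (S n)))).
  - intros n; rewrite sum_n_Reals, sum_f_R0_rsum, (rsum_ext _ _ _ (fun k _ => Htelescope k)).
    rewrite rsum_scal, rsum_telescope; reflexivity.
  - apply (is_lim_seq_scal_l _ _ (w 0%nat - 0)), is_lim_seq_minus';
      [apply is_lim_seq_const | apply (is_lim_seq_incr_1 w 0), Hw].
Qed.

Lemma Sxi_Xres xi :
  / INR N * Sxi N xi (Xres N lam M) =
  p1 N xi ^ 2 + / INR N * Sxi N xi
    (fun i j => 2 * mmul N (fun x y => Idm x y - Q x y) M i j / (lam * mtr N M)).
Proof.
  pose proof mtr_resolvent_pos.
  unfold Xres; rewrite Sxi_mlin, Sxi_Jm by lia.
  rewrite (Sxi_agree N xi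
    (fun i j => 2 * mmul N (fun x y => Idm x y - Q x y) M i j / (lam * mtr N M))
    (fun i j => / (lam * mtr N M) * mlin 1 Idm (- lam) M i j)).
  - rewrite Sxi_scal; field; split; lra.
  - intros i j Hi Hj; rewrite mmul_IsubQ_resolvent by auto; unfold mlin; field; lra.
Qed.

End Resolvent.

Theorem lemma4p1 (N : nat) (Q : Mat) (lam : R) (xi : nat -> bool) (M : Mat) :
  (8 < N)%nat ->
  stochastic N Q -> irreducible N Q -> symmetric N Q -> mtr N Q = 0 ->
  0 < lam ->
  is_inverse N (Aλ lam Q) M ->
  let a := fun n : nat =>
    (INR N / (INR N + lam)) ^ n * (/ INR N * Sxi N xi (L0pow N Q n (Jm N))) in
  (exists l, infinite_sum (fun n => Rabs (a n)) l) /\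
  exists l, infinite_sum a l /\
    lam / (INR N + lam) * l =
    p1 N xi ^ 2
    + / INR N * Sxi N xi
        (fun i j => 2 * mmul N (fun x y => Idm x y - Q x y) M i j
                    / (lam * mtr N M)).
Proof.
  intros HN8 Hst _ Hsym _ Hlam Hinv a.
  assert (HN : (2 <= N)%nat) by lia.
  assert (HNpos : 0 < INR N) by (apply lt_0_INR; lia).
  assert (Hr : 0 < INR N / (INR N + lam) < 1) by (apply div_add_in_01; lra).
  split.
  - destruct (ex_series_Sxi_L0pow N Q HN Hst Hsym xi (Jm N) _ Hr) as [l Hl].
    exists l; apply is_series_Reals, Hl.
  - eexists; split.
    + apply is_series_Reals, (is_series_Xres N Q lam M HN Hst Hsym Hlam Hinv).
    + rewrite <- (Sxi_Xres N Q lam M HN Hst Hsym Hlam Hinv); field; lra.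
Qed.
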